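(* Let $m,r$ be positive integers, let $W\in\mathbb{R}^{m\times m}$ be a fixed real symmetric matrix, and define $f:\mathbb{R}^{m\times r}\to\mathbb{R}$ by $f(U)=F(W,U):=\frac{1}{2}\|W-UU^{T}\|_{F}^{2}$. Let $\psi:\mathbb{R}^{m\times r}\rightarrow\mathbb{R}$ be the kernel \[ \psi(U):= \frac{3}{2}\|U\|_{F}^{4}+\|W\|_{F}\|U\|_{F}^{2}. \] Then for every $L\ge 1$, the pair $(f,\psi)$ is $L$-smooth adaptable on $\mathbb{R}^{m\times r}$, i.e. \[ |f(X)-f(Y)-\langle\nabla f(Y),X-Y\rangle|\le L\, D_{\psi}(X,Y)\quad \text{for all } X,Y\in\mathbb{R}^{m\times r}. \]
   Context: $\|\cdot\|_F$ is the Frobenius norm and $\langle Y_1,Y_2\rangle:=\mathrm{tr}(Y_1^{T}Y_2)$. For a differentiable function $\psi$, the Bregman distance is $D_{\psi}(X,Y):=\psi(X)-\psi(Y)-\langle\nabla\psi(Y),X-Y\rangle$. A pair $(f,\psi)$ is called $L$-smooth adaptable ($L$-smad) on a set $C$ if there is $L>0$ with $|f(x)-f(y)-\langle\nabla f(y),x-y\rangle|\le L D_{\psi}(x,y)$ for all $x,y\in C$. In the paper, $W$ is the current iterate $W^{k+1}$ of an alternating algorithm, which is symmetric. *)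

From HB Require Import structures.
From mathcomp Require Import all_boot all_order all_algebra.
From mathcomp Require Import all_classical all_reals all_analysis.
Set Implicit Arguments. Unset Strict Implicit. Unset Printing Implicit Defensive.
Import Order.TTheory GRing.Theory Num.Theory.
Import numFieldNormedType.Exports.
Local Open Scope ring_scope.

Definition frob_inner (R : realType) (m r : nat) (A B : 'M[R]_(m, r)) : R :=
  \tr (A^T *m B).

Definition frob_norm (R : realType) (m r : nat) (A : 'M[R]_(m, r)) : R :=
  Num.sqrt (\sum_(i < m) \sum_(j < r) A i j ^+ 2).

Definition grad (R : realType) (m r : nat) (g : 'M[R]_(m, r) -> R)
    (Y : 'M[R]_(m, r)) : 'M[R]_(m, r) :=
  \matrix_(i < m, j < r) ('D_(delta_mx i j) g Y).

Definition bregman (R : realType) (m r : nat) (psi : 'M[R]_(m, r) -> R)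
    (X Y : 'M[R]_(m, r)) : R :=
  psi X - psi Y - frob_inner (grad psi Y) (X - Y).

Definition L_smad (R : realType) (m r : nat) (f psi : 'M[R]_(m, r) -> R)
    (L : R) (C : set 'M[R]_(m, r)) : Prop :=
  [/\ 0 < L,
      (forall Y, differentiable f Y),
      (forall Y, differentiable psi Y) &
      (forall X Y, C X -> C Y ->
         `| f X - f Y - frob_inner (grad f Y) (X - Y) | <= L * bregman psi X Y)].

Definition F_obj (R : realType) (m r : nat) (W : 'M[R]_m) (U : 'M[R]_(m, r)) : R :=
  2^-1 * frob_norm (W - U *m U^T) ^+ 2.

Definition psi_kernel (R : realType) (m r : nat) (W : 'M[R]_m) (U : 'M[R]_(m, r)) : R :=
  3 / 2 * frob_norm U ^+ 4 + frob_norm W * frob_norm U ^+ 2.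

From HB Require Import structures.
From mathcomp Require Import all_boot all_order all_algebra.
From mathcomp Require Import all_classical all_reals all_analysis.
From mathcomp Require Import ring lra.
Set Implicit Arguments. Unset Strict Implicit. Unset Printing Implicit Defensive.
Import Order.TTheory GRing.Theory Num.Theory.
Import numFieldNormedType.Exports.
Local Open Scope ring_scope.

(* Along every line h |-> h D + U both f = F_obj W and psi are quartic
   polynomials in h, and for a quartic p the first-order Taylor remainder is
   given exactly by a quadrature rule: p(1) - p(0) - p'(0) = p''(0)/6 + p''(1/2)/3.
   So both remainders are averages of second directional derivatives, which are
   compared pointwise: with A = U D^T + D U^T,
     f''(U)[D] = |A|^2 - 2<W, D D^T> + 2|U^T D|^2
   has absolute value at most 6|U|^2|D|^2 + 2|W||D|^2 by Cauchy-Schwarz and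
   submultiplicativity of the Frobenius norm, and this is at most
     psi''(U)[D] = 12<U, D>^2 + 6|U|^2|D|^2 + 2|W||D|^2.
   Hence |f(X) - f(Y) - <grad f(Y), X - Y>| <= D_psi(X, Y), and L >= 1 only
   enlarges the right-hand side. *)

Local Notation ip := frob_inner.

Section FrobeniusInnerProduct.
Variable R : realType.
Implicit Types (m n p : nat).

Lemma frob_innerE m n (A B : 'M[R]_(m, n)) : ip A B = \sum_i \sum_j A i j * B i j.
Proof.
rewrite /frob_inner /mxtrace exchange_big; apply: eq_bigr => j _.
by rewrite mxE; apply: eq_bigr => i _; rewrite !mxE.
Qed.

Lemma frob_innerC m n (A B : 'M[R]_(m, n)) : ip A B = ip B A.
Proof. by rewrite /frob_inner -mxtrace_tr trmx_mul trmxK. Qed.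

Lemma frob_innerDr m n (A B C : 'M[R]_(m, n)) : ip A (B + C) = ip A B + ip A C.
Proof. by rewrite /frob_inner mulmxDr mxtraceD. Qed.

Lemma frob_innerZr m n (A B : 'M[R]_(m, n)) k : ip A (k *: B) = k * ip A B.
Proof. by rewrite /frob_inner -scalemxAr mxtraceZ. Qed.

Lemma frob_innerNr m n (A B : 'M[R]_(m, n)) : ip A (- B) = - ip A B.
Proof. by rewrite -scaleN1r frob_innerZr mulN1r. Qed.

Lemma frob_innerDl m n (A B C : 'M[R]_(m, n)) : ip (A + B) C = ip A C + ip B C.
Proof. by rewrite frob_innerC frob_innerDr !(frob_innerC C). Qed.

Lemma frob_innerZl m n (A B : 'M[R]_(m, n)) k : ip (k *: A) B = k * ip A B.
Proof. by rewrite frob_innerC frob_innerZr frob_innerC. Qed.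

Lemma frob_innerNl m n (A B : 'M[R]_(m, n)) : ip (- A) B = - ip A B.
Proof. by rewrite frob_innerC frob_innerNr frob_innerC. Qed.

Definition frob_inner_linE :=
  (frob_innerDl, frob_innerDr, frob_innerNl, frob_innerNr, frob_innerZl, frob_innerZr).

Lemma frob_inner_ge0 m n (A : 'M[R]_(m, n)) : 0 <= ip A A.
Proof.
by rewrite frob_innerE sumr_ge0 // => i _; rewrite sumr_ge0 // => j _; rewrite -expr2 sqr_ge0.
Qed.

Lemma frob_norm_ge0 m n (A : 'M[R]_(m, n)) : 0 <= frob_norm A.
Proof. exact: sqrtr_ge0. Qed.

Lemma frob_norm_sqr m n (A : 'M[R]_(m, n)) : frob_norm A ^+ 2 = ip A A.
Proof.
have sumE : \sum_i \sum_j A i j ^+ 2 = ip A A.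
  by rewrite frob_innerE; apply: eq_bigr => i _; apply: eq_bigr => j _; rewrite expr2.
by rewrite /frob_norm sqr_sqrtr sumE ?frob_inner_ge0.
Qed.

Lemma frob_inner_tr m n (A B : 'M[R]_(m, n)) : ip A^T B^T = ip A B.
Proof. by rewrite /frob_inner trmxK mxtrace_mulC -mxtrace_tr trmx_mul trmxK. Qed.

Lemma frob_inner_mulmxl m n p (A : 'M[R]_(m, n)) (B : 'M[R]_(n, p)) (C : 'M[R]_(m, p)) :
  ip (A *m B) C = ip B (A^T *m C).
Proof. by rewrite /frob_inner trmx_mul mulmxA. Qed.

Lemma frob_inner_mulmxr m n p (A : 'M[R]_(m, n)) (B : 'M[R]_(n, p)) (C : 'M[R]_(m, p)) :
  ip (A *m B) C = ip A (C *m B^T).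
Proof. by rewrite /frob_inner trmx_mul -mulmxA mxtrace_mulC mulmxA. Qed.

Lemma frob_inner_delta m n (A : 'M[R]_(m, n)) i j : ip A (delta_mx i j) = A i j.
Proof.
rewrite frob_innerE (bigD1 i) //= (bigD1 j) //= mxE !eqxx mulr1.
rewrite big1 => [|k kj]; last by rewrite mxE (negbTE kj) andbF mulr0.
rewrite addr0 big1 ?addr0 // => k ki.
by rewrite big1 // => l _; rewrite mxE (negbTE ki) mulr0.
Qed.

Lemma frob_inner_sqr_le m n (A B : 'M[R]_(m, n)) : ip A B ^+ 2 <= ip A A * ip B B.
Proof.
set a := ip A A; set b := ip A B; set c := ip B B.
have a0 : 0 <= a := frob_inner_ge0 A.
have c0 : 0 <= c := frob_inner_ge0 B.
have h1 := frob_inner_ge0 (a *: B - b *: A).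
have h2 := frob_inner_ge0 (c *: A - b *: B).
have h3 := frob_inner_ge0 (A - b *: B).
rewrite !frob_inner_linE (frob_innerC B A) -/a -/b -/c in h1 h2 h3.
have [a_eq0|a_neq0] := eqVneq a 0; last first.
  have a_gt0 : 0 < a by rewrite lt0r a_neq0 a0.
  nra.
have [c_eq0|c_neq0] := eqVneq c 0; last first.
  have c_gt0 : 0 < c by rewrite lt0r c_neq0 c0.
  nra.
rewrite a_eq0 c_eq0 in h3 *; nra.
Qed.

Lemma frob_inner_mulmx_le m n p (A : 'M[R]_(m, n)) (B : 'M[R]_(n, p)) :
  ip (A *m B) (A *m B) <= ip A A * ip B B.
Proof.
rewrite !frob_innerE [X in _ <= _ * X]exchange_big /= mulr_suml.
apply: ler_sum => i _; rewrite mulr_sumr; apply: ler_sum => j _.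
have -> : (A *m B) i j = ip (row i A) (col j B)^T.
  by rewrite frob_innerE big_ord1 mxE; apply: eq_bigr => k _; rewrite !mxE.
have -> : \sum_k A i k * A i k = ip (row i A) (row i A).
  by rewrite frob_innerE big_ord1; apply: eq_bigr => k _; rewrite !mxE.
have -> : \sum_k B k j * B k j = ip (col j B)^T (col j B)^T.
  by rewrite frob_innerE big_ord1; apply: eq_bigr => k _; rewrite !mxE.
by rewrite -expr2 frob_inner_sqr_le.
Qed.

Lemma frob_norm_tr m n (A : 'M[R]_(m, n)) : frob_norm A^T = frob_norm A.
Proof.
by apply/eqP; rewrite -(eqrXn2 (n := 2)) ?frob_norm_ge0 // !frob_norm_sqr frob_inner_tr.
Qed.

Lemma frob_norm_mulmx_le m n p (A : 'M[R]_(m, n)) (B : 'M[R]_(n, p)) :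
  frob_norm (A *m B) <= frob_norm A * frob_norm B.
Proof.
rewrite -(ler_pXn2r (n := 2)) ?nnegrE ?mulr_ge0 ?frob_norm_ge0 //.
by rewrite exprMn !frob_norm_sqr frob_inner_mulmx_le.
Qed.

Lemma normr_frob_inner_le m n (A B : 'M[R]_(m, n)) :
  `|ip A B| <= frob_norm A * frob_norm B.
Proof.
rewrite -(ler_pXn2r (n := 2)) ?nnegrE ?mulr_ge0 ?frob_norm_ge0 //.
by rewrite exprMn !frob_norm_sqr real_normK ?num_real // frob_inner_sqr_le.
Qed.

End FrobeniusInnerProduct.

Section QuarticOnLines.
Variables (R : realFieldType) (V : lmodType R).

Definition quartic_on_lines (g : V -> R) (c1 c2 c3 c4 : V -> V -> R) :=
  forall U D (h : R), g (h *: D + U) =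
    g U + c1 U D * h + c2 U D * h ^+ 2 + c3 U D * h ^+ 3 + c4 U D * h ^+ 4.

Lemma quartic_taylor_remainder g c1 c2 c3 c4 U D :
  quartic_on_lines g c1 c2 c3 c4 ->
  g (D + U) - g U - c1 U D = c2 U D / 3 + 2 * c2 (2^-1 *: D + U) D / 3.
Proof.
move=> gE; set Z := 2^-1 *: D + U.
(* Matching the expansions at U and at Z in five points gives
   c2 Z D = c2 U D + 3/2 c3 U D + 3/2 c4 U D. *)
have shiftE k : g (k *: D + Z) = g ((k + 2^-1) *: D + U).
  by rewrite /Z scalerDl addrA.
have e0 := shiftE 0; have e1 := shiftE 1; have e2 := shiftE (-1).
have e3 := shiftE 2; have e4 := shiftE (-2).
have := gE U D 1; rewrite scale1r => ->.
rewrite !gE in e0 e1 e2 e3 e4.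
rewrite !expr2 !exprS !expr0 in e0 e1 e2 e3 e4 *.
lra.
Qed.

Lemma quartic_taylor_remainder_le g c1 c2 c3 c4 k d1 d2 d3 d4 X Y :
  quartic_on_lines g c1 c2 c3 c4 -> quartic_on_lines k d1 d2 d3 d4 ->
  (forall U D, `|c2 U D| <= d2 U D) ->
  `|g X - g Y - c1 Y (X - Y)| <= k X - k Y - d1 Y (X - Y).
Proof.
move=> gE kE c2_le; rewrite -{1 3}(subrK Y X).
rewrite (quartic_taylor_remainder _ _ gE) (quartic_taylor_remainder _ _ kE).
set Z := 2^-1 *: (X - Y) + Y.
have := c2_le Y (X - Y); have := c2_le Z (X - Y).
rewrite !ler_norml => /andP[? ?] /andP[? ?].
apply/andP; split; lra.
Qed.

End QuarticOnLines.

Lemma derive_quartic_on_lines (R : realFieldType) (V : normedModType R)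
    (g : V -> R) c1 c2 c3 c4 U D :
  quartic_on_lines g c1 c2 c3 c4 -> 'D_D g U = c1 U D.
Proof.
move=> gE.
pose p : {poly R} := (g U)%:P + c1 U D *: 'X + c2 U D *: 'X^2 + c3 U D *: 'X^3
  + c4 U D *: 'X^4.
have pE h : p.[h] = g (h *: D + U).
  by rewrite gE /p !(hornerD, hornerZ, hornerC, hornerX, hornerXn) !(mulrC _ h).
have lineE : (fun h : R => h^-1 *: ((g \o shift U) (h *: D) - g U)) =
    (fun h => h^-1 *: (p.[h + 0] - p.[0])).
  by apply: funext => h /=; rewrite addr0 !pE scale0r add0r.
have -> : 'D_D g U = derive1 (horner p) 0 by rewrite /derive /derive1 lineE.
by rewrite -derivE horner_coef0 coef_deriv /p !coefE /= !mulr0 !addr0 add0r mulr1.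
Qed.

Lemma grad_eq (R : realType) m n (g : 'M[R]_(m, n) -> R) U G :
  (forall D, 'D_D g U = ip G D) -> grad g U = G.
Proof. by move=> gD; apply/matrixP => i j; rewrite mxE gD frob_inner_delta. Qed.

Lemma differentiable_frob_inner (R : realType) (V : normedModType R) m n
    (f g : V -> 'M[R]_(m, n)) x :
  (forall i j, differentiable (fun y => f y i j) x) ->
  (forall i j, differentiable (fun y => g y i j) x) ->
  differentiable (fun y => ip (f y) (g y)) x.
Proof.
move=> df dg.
have -> : (fun y => ip (f y) (g y)) = \sum_i \sum_j (fun y => f y i j * g y i j).
  apply: funext => y; rewrite frob_innerE fct_sumE; apply: eq_bigr => i _.
  by rewrite fct_sumE.
apply: differentiable_sum => i; apply: differentiable_sum => j.
exact: differentiableM.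
Qed.

Section Objective.
Variables (R : realType) (m r : nat) (W : 'M[R]_m).
Implicit Types U D : 'M[R]_(m, r).

Definition F_obj_grad U : 'M[R]_(m, r) := - 2 *: ((W - U *m U^T) *m U).

Definition F_obj_hess U D : R :=
  ip (U *m D^T + D *m U^T) (U *m D^T + D *m U^T) - 2 * ip (W - U *m U^T) (D *m D^T).

Definition psi_kernel_grad U : 'M[R]_(m, r) := (6 * ip U U + 2 * frob_norm W) *: U.

Definition psi_kernel_hess U D : R :=
  12 * ip U D ^+ 2 + 6 * ip U U * ip D D + 2 * frob_norm W * ip D D.

Lemma mulmx_tr_shift U D (h : R) :
  (h *: D + U) *m (h *: D + U)^T =
  U *m U^T + h *: (U *m D^T + D *m U^T) + h ^+ 2 *: (D *m D^T).
Proof.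
rewrite linearD linearZ /= mulmxDl !mulmxDr -!scalemxAl -!scalemxAr scalerA.
move: (U *m U^T) (U *m D^T) (D *m U^T) (D *m D^T) => UU UD DU DD.
by apply/matrixP => i j; rewrite !mxE; ring.
Qed.

Lemma F_obj_quartic : W^T = W ->
  quartic_on_lines (F_obj W) (fun U D => ip (F_obj_grad U) D)
    (fun U D => F_obj_hess U D / 2) (fun U D => ip (U *m D^T + D *m U^T) (D *m D^T))
    (fun U D => ip (D *m D^T) (D *m D^T) / 2).
Proof.
move=> W_sym U D h; rewrite /F_obj /F_obj_hess /F_obj_grad !frob_norm_sqr mulmx_tr_shift.
set E := W - U *m U^T; set A := U *m D^T + D *m U^T; set B := D *m D^T.
have E_sym : E^T = E by rewrite /E linearB /= trmx_mul trmxK W_sym.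
have EUD : ip E (U *m D^T) = ip E (D *m U^T).
  by rewrite -frob_inner_tr E_sym trmx_mul trmxK.
have EDU : ip E (D *m U^T) = ip (E *m U) D.
  by rewrite frob_inner_mulmxr.
have EA : ip E A = 2 * ip (E *m U) D by rewrite /A frob_innerDr EUD EDU; ring.
have -> : W - (U *m U^T + h *: A + h ^+ 2 *: B) = E - h *: A - h ^+ 2 *: B.
  by rewrite /E !opprD !addrA.
clearbody E A B.
rewrite !frob_inner_linE (frob_innerC A E) (frob_innerC B E) (frob_innerC B A) EA.
by field.
Qed.

Lemma psi_kernel_quartic :
  quartic_on_lines (psi_kernel W) (fun U D => ip (psi_kernel_grad U) D)
    (fun U D => psi_kernel_hess U D / 2) (fun U D => 6 * ip U D * ip D D)
    (fun U D => 3 / 2 * ip D D ^+ 2).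
Proof.
move=> U D h; rewrite /psi_kernel /psi_kernel_hess /psi_kernel_grad.
rewrite -[4%N]/(2 * 2)%N !exprM !frob_norm_sqr !frob_inner_linE (frob_innerC D U).
by field.
Qed.

Lemma frob_inner_gram U D :
  ip (U *m U^T) (D *m D^T) = ip (U^T *m D) (U^T *m D).
Proof. by rewrite frob_inner_mulmxl mulmxA frob_innerC frob_inner_mulmxr trmxK. Qed.

Lemma F_obj_hess_le U D : `|F_obj_hess U D| <= psi_kernel_hess U D.
Proof.
rewrite /F_obj_hess /psi_kernel_hess [ip (W - _) _]frob_innerDl frob_innerNl.
set s := ip U U; set q := ip D D; set w := frob_norm W.
set P := U *m D^T; set Q := D *m U^T.
have s0 : 0 <= s := frob_inner_ge0 U.
have q0 : 0 <= q := frob_inner_ge0 D.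
have w0 : 0 <= w := frob_norm_ge0 W.
have PP : ip P P <= s * q by rewrite -[q]frob_inner_tr frob_inner_mulmx_le.
have QQ : ip Q Q <= q * s by rewrite -[s]frob_inner_tr frob_inner_mulmx_le.
have PQ : 0 <= ip (P - Q) (P - Q) := frob_inner_ge0 _.
have PQ' : 0 <= ip (P + Q) (P + Q) := frob_inner_ge0 _.
rewrite !frob_inner_linE (frob_innerC Q P) in PQ PQ' *.
have G0 : 0 <= ip (U *m U^T) (D *m D^T) by rewrite frob_inner_gram frob_inner_ge0.
have G : ip (U *m U^T) (D *m D^T) <= s * q.
  by rewrite frob_inner_gram -[s]frob_inner_tr frob_inner_mulmx_le.
have WB : `|ip W (D *m D^T)| <= w * q.
  apply: le_trans (normr_frob_inner_le _ _) _; rewrite -/w ler_wpM2l //.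
  apply: le_trans (frob_norm_mulmx_le _ _) _.
  by rewrite frob_norm_tr -expr2 frob_norm_sqr.
move: WB; rewrite !ler_norml => /andP[WB1 WB2].
have p2 := sqr_ge0 (ip U D).
apply/andP; split; lra.
Qed.

Lemma grad_F_obj U : W^T = W -> grad (F_obj W) U = F_obj_grad U.
Proof.
by move=> W_sym; apply: grad_eq => D; apply: derive_quartic_on_lines (F_obj_quartic W_sym).
Qed.

Lemma grad_psi_kernel U : grad (psi_kernel W) U = psi_kernel_grad U.
Proof. by apply: grad_eq => D; apply: derive_quartic_on_lines psi_kernel_quartic. Qed.

Lemma differentiable_F_obj U : differentiable (F_obj W) U.
Proof.
have -> : F_obj W = fun V : 'M[R]_(m, r) => 2^-1 * ip (W - V *m V^T) (W - V *m V^T).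
  by apply: funext => V; rewrite /F_obj frob_norm_sqr.
apply: differentiableM; first exact: differentiable_cst.
have entry i j : differentiable (fun V : 'M[R]_(m, r) => (W - V *m V^T) i j) U.
  have -> : (fun V : 'M[R]_(m, r) => (W - V *m V^T) i j) =
      cst (W i j) - \sum_k (fun V : 'M[R]_(m, r) => V i k * V j k).
    apply: funext => V; rewrite !mxE fct_sumE /=; congr (_ - _).
    by apply: eq_bigr => k _; rewrite mxE.
  apply: differentiableB; first exact: differentiable_cst.
  by apply: differentiable_sum => k; apply: differentiableM; apply: differentiable_coord.
exact: differentiable_frob_inner.
Qed.

Lemma differentiable_psi_kernel U : differentiable (psi_kernel W) U.
Proof.
have -> : psi_kernel W = fun V : 'M[R]_(m, r) =>
    3 / 2 * (ip V V * ip V V) + frob_norm W * ip V V.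
  by apply: funext => V; rewrite /psi_kernel -[4%N]/(2 * 2)%N exprM frob_norm_sqr expr2.
have dip : differentiable (fun V : 'M[R]_(m, r) => ip V V) U.
  by apply: differentiable_frob_inner => i j; apply: differentiable_coord.
by apply: differentiableD; apply: differentiableM; try exact: differentiable_cst;
  try apply: differentiableM.
Qed.

End Objective.

Theorem proposition1 (R : realType) (m r : nat) (hm : (0 < m)%N) (hr : (0 < r)%N)
    (W : 'M[R]_m) (hW : W^T = W) (L : R) (hL : 1 <= L) :
  L_smad (F_obj W) (psi_kernel W) L [set: 'M[R]_(m, r)].
Proof.
split; [exact: lt_le_trans ltr01 hL | exact: differentiable_F_obj
  | exact: differentiable_psi_kernel |].
move=> X Y _ _; rewrite /bregman grad_F_obj // grad_psi_kernel.
have hess_le (U D : 'M[R]_(m, r)) :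
   `|F_obj_hess W U D / 2| <= psi_kernel_hess W U D / 2.
  by rewrite normrM [`|2^-1|]ger0_norm // ler_pM2r // F_obj_hess_le.
have rem_le :=
  quartic_taylor_remainder_le X Y (F_obj_quartic hW) (psi_kernel_quartic W) hess_le.
apply: (le_trans rem_le).
exact: ler_peMl (le_trans (normr_ge0 _) rem_le) hL.
Qed.
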